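(* Let $\Omega$ be a topological signature, let $A$ be a profinite $\Omega$-algebra, and let $\theta$ be a closed congruence on $A$ such that the quotient space $A/\theta$ is 0-dimensional. Then $\theta$ is a profinite congruence, i.e., the quotient topological algebra $A/\theta$ is profinite.
   Context: A signature is a disjoint union $\Omega=\biguplus_{n\in\mathbb{N}}\Omega_n$; it is topological if each $\Omega_n$ is a topological space. An $\Omega$-algebra is a set $A$ with evaluation maps $E_n^A:\Omega_n\times A^n\to A$; it is a topological $\Omega$-algebra if $A$ is a topological space and each $E_n^A$ is continuous. Compact spaces are required to be Hausdorff. A topological algebra is profinite if it is compact and residually finite, i.e. for any two distinct elements there is a continuous homomorphism into a finite discrete topological $\Omega$-algebra separating them. A congruence $\theta$ is closed if it is a closed subset of $A\times A$; the quotient $A/\theta$ carries the quotient topology and the induced operations. A congruence is called profinite if the quotient topological algebra $A/\theta$ is profinite. *)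

From HB Require Import structures.
From mathcomp Require Import all_boot all_order all_algebra.
From mathcomp Require Import all_classical all_reals all_analysis.
From mathcomp Require Import generic_quotient.

Set Implicit Arguments.
Unset Strict Implicit.
Unset Printing Implicit Defensive.

Local Open Scope classical_set_scope.
Local Open Scope quotient_scope.

Section TopAlg.

Variable Omega : nat -> topologicalType.

(* Evaluation maps E_n : Omega_n x A^n -> A (A^n is represented as 'I_n -> A, with the product topology {ptws 'I_n -> A}). *)
Definition ops (A : Type) := forall n : nat, Omega n -> ('I_n -> A) -> A.

Definition top_alg (A : topologicalType) (E : ops A) : Prop :=
  forall n : nat, continuous (fun p : Omega n * {ptws 'I_n -> A} => E n p.1 p.2).

Definition is_hom (A B : Type) (EA : ops A) (EB : ops B) (h : A -> B) : Prop :=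
  forall n (w : Omega n) (a : 'I_n -> A), h (EA n w a) = EB n w (h \o a).

Definition finite_discrete_alg (F : topologicalType) (EF : ops F) : Prop :=
  [/\ finite_set [set: F], (forall U : set F, open U) & top_alg EF].

Definition residually_finite (A : topologicalType) (E : ops A) : Prop :=
  forall x y : A, x <> y ->
    exists (F : topologicalType) (EF : ops F), finite_discrete_alg EF /\
      exists h : A -> F, [/\ continuous h, is_hom E EF h & h x <> h y].

(* Profinite topological Omega-algebra: a topological algebra which is
   compact (compact spaces being Hausdorff by convention) and residually finite. *)
Definition profinite (A : topologicalType) (E : ops A) : Prop :=
  [/\ top_alg E, compact [set: A], hausdorff_space A & residually_finite E].

Record congruence (A : Type) (E : ops A) (theta : set (A * A)) : Prop := {
  cong_refl : forall x, theta (x, x);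
  cong_sym : forall x y, theta (x, y) -> theta (y, x);
  cong_trans : forall x y z, theta (x, y) -> theta (y, z) -> theta (x, z);
  cong_compat : forall n (w : Omega n) (a b : 'I_n -> A),
      (forall i, theta (a i, b i)) -> theta (E n w a, E n w b)
}.

Section Quotient.
Variables (A : topologicalType) (E : ops A) (theta : set (A * A)).
Hypothesis Hth : congruence E theta.

Definition theta_rel : rel A := fun x y => `[< theta (x, y) >].

Lemma theta_rel_refl : reflexive theta_rel.
Proof. by move=> x; apply/asboolP; exact: (cong_refl Hth). Qed.
Lemma theta_rel_sym : symmetric theta_rel.
Proof.
by move=> x y; apply/asboolP/asboolP; exact: (cong_sym Hth).
Qed.
Lemma theta_rel_trans : transitive theta_rel.
Proof.
by move=> y x z /asboolP H1 /asboolP H2; apply/asboolP; exact: (cong_trans Hth H1 H2).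
Qed.

Definition theta_equiv : equiv_rel A :=
  EquivRel theta_rel theta_rel_refl theta_rel_sym theta_rel_trans.

Definition quot_space : topologicalType :=
  quotient_topology {eq_quot theta_equiv}.

(* The induced operations on A/theta (well defined since theta is a congruence). *)
Definition quot_ops : ops quot_space :=
  fun n w q => \pi_(quot_space) (@E n w (fun i => repr (q i))).

End Quotient.

End TopAlg.

Definition zero_dim (T : topologicalType) : Prop :=
  forall (x : T) (U : set T), nbhs x U ->
    exists V : set T, [/\ clopen V, V x & V `<=` U].

Arguments quot_ops {Omega A E theta} Hth : rename.
Arguments quot_space {Omega A E theta} Hth.

From mathcomp Require Import all_boot all_order all_algebra.
From mathcomp Require Import all_classical all_reals all_analysis generic_quotient.
From mathcomp Require Import finmap.
From Stdlib Require Import Relation_Operators.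

Set Implicit Arguments.
Unset Strict Implicit.
Unset Printing Implicit Defensive.
Local Open Scope classical_set_scope.

(* Every clopen set C of A/theta pulls back to a clopen theta-saturated set C'
   of A. By compactness of C' x ~C', finitely many kernels of continuous
   homomorphisms into finite discrete algebras separate C' from its complement;
   their intersection kappa is a congruence with open classes saturating C', and
   so is the congruence sigma generated by theta and kappa. A congruence with open
   classes on a compact algebra has finitely many classes, so A/sigma is a finite
   discrete algebra, and A/theta -> A/sigma separates C from its complement.
   Points of A/theta are closed because theta is, so clopen sets separate points:
   this yields residual finiteness and the Hausdorff property, while the same
   congruences sigma, used as neighbourhoods, give continuity of the operations. *)

(* The library's [compact_cover] is stated for pointed spaces only. *)
Lemma compact_cover_compact (T : topologicalType) (K : set T) :
  compact K -> cover_compact K.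
Proof.
move=> cK I D f fo Kcov; apply: contrapT => nfin.
pose G := filter_from [set D' : {fset I} | {subset D' <= D}]
  (fun D' => K `\` cover [set` D'] f).
have GF : ProperFilter G.
  apply: filter_from_proper; last first.
    move=> D' sD'; apply: contrapT => /set0P/negP; rewrite negbK => /eqP KD'0.
    apply: nfin; exists D' => // x Kx; apply: contrapT => nx.
    by have : (K `\` cover [set` D'] f) x by []; rewrite KD'0.
  apply: filter_from_filter; first by exists fset0 => i; rewrite inE.
  move=> D1 D2 s1 s2; exists (D1 `|` D2)%fset.
    by move=> i; rewrite inE => /orP[/s1|/s2].
  move=> x [Kx nc]; split; split=> // -[i /= iD fxi]; apply: nc;
    by exists i => //=; rewrite inE iD ?orbT.
have [|p [Kp clp]] := cK G GF; first by exists fset0 => [i|x []]; rewrite ?inE.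
have [i Di fip] := Kcov p Kp.
have G1 : G (K `\` f i).
  exists [fset i]%fset => [j|x [Kx nc]]; first by rewrite inE => /eqP ->; exact/mem_set.
  by split=> // fxi; apply: nc; exists i; rewrite /= ?inE.
have [y [[_ nfy] fy]] := clp _ _ G1 (open_nbhs_nbhs (conj (fo i Di) fip)).
exact: nfy fy.
Qed.

Section Congruences.
Variables (Omega : nat -> topologicalType) (A : topologicalType) (E : ops Omega A).
Implicit Types (theta kappa sigma : set (A * A)) (C : set A).

Definition open_classes sigma := forall a, open [set b | sigma (a, b)].

Definition saturated sigma C := forall a b, sigma (a, b) -> C a -> C b.

Definition kernel (B : Type) (h : A -> B) : set (A * A) := [set p | h p.1 = h p.2].

Definition cong_join theta kappa : set (A * A) :=
  [set p | clos_refl_trans A (fun x y => theta (x, y) \/ kappa (x, y)) p.1 p.2].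

Lemma congruence_kernel (F : Type) (EF : ops Omega F) (h : A -> F) :
  is_hom E EF h -> congruence E (kernel h).
Proof.
move=> hh; rewrite /kernel; split=> [//|x y /= ->//|x y z /= -> ->//|n w a b ab /=].
by rewrite !hh; congr (EF n w _); apply: funext => i; exact: ab.
Qed.

Lemma open_classes_kernel (F : topologicalType) (h : A -> F) :
  continuous h -> (forall U : set F, open U) -> open_classes (kernel h).
Proof.
by move=> hc opnF a; apply: (@open_comp _ _ h [set y | h a = y]) => // x _; exact: hc.
Qed.

Lemma congruence_bigcap (I : Type) (D : set I) (k : I -> set (A * A)) :
  (forall i, D i -> congruence E (k i)) -> congruence E (\bigcap_(i in D) k i).
Proof.
move=> kc; split.
- by move=> x i /kc/cong_refl.
- by move=> x y xy i Di; apply: (cong_sym (kc i Di)); exact: xy.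
- by move=> x y z xy yz i Di; apply: (cong_trans (kc i Di)); [exact: xy | exact: yz].
- by move=> n w a b ab i Di; apply: (cong_compat (kc i Di)) => j; exact: ab.
Qed.

Lemma open_classes_bigcap (I : choiceType) (D : {fset I}) (k : I -> set (A * A)) :
  (forall i, i \in D -> open_classes (k i)) ->
  open_classes (\bigcap_(i in [set` D]) k i).
Proof.
move=> ko a; rewrite openE => b kab.
have : nbhs b (\bigcap_(i in [set` D]) [set b' | k i (a, b')]).
  by apply: filter_bigI => i iD; apply: open_nbhs_nbhs; split; [exact: ko | exact: kab].
by apply: filterS => b' kab' i iD; exact: kab'.
Qed.

Lemma open_classes_sub kappa sigma : congruence E kappa -> congruence E sigma ->
  kappa `<=` sigma -> open_classes kappa -> open_classes sigma.
Proof.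
move=> kc sc ks ko a; rewrite openE => b sab.
apply: filterS (open_nbhs_nbhs (conj (ko b) (cong_refl kc b))) => b' kbb'.
exact: (cong_trans sc sab (ks _ kbb')).
Qed.

Lemma clos_rt_compat (R : A -> A -> Prop) :
  (forall n (w : Omega n) (a : 'I_n -> A) j x y,
     R x y -> R (E w (dfwith a j x)) (E w (dfwith a j y))) ->
  forall n (w : Omega n) (a b : 'I_n -> A),
  (forall i, clos_refl_trans A R (a i) (b i)) ->
  clos_refl_trans A R (E w a) (E w b).
Proof.
move=> R1 n w a b ab.
have Rj (c : 'I_n -> A) (j : 'I_n) x y : clos_refl_trans A R x y ->
    clos_refl_trans A R (E w (dfwith c j x)) (E w (dfwith c j y)).
  elim=> [x' y' Rxy|x'|x' y' z' _ IHxy _ IHyz]; first by apply: rt_step; exact: R1.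
    exact: rt_refl.
  exact: rt_trans IHxy IHyz.
pose c k (i : 'I_n) := if (i < k)%N then b i else a i.
suff /(_ n (leqnn n)) : forall k, (k <= n)%N -> clos_refl_trans A R (E w a) (E w (c k)).
  by congr (clos_refl_trans A R _ (E w _)); apply: funext => i; rewrite /c ltn_ord.
elim=> [_|k IHk kn].
  by rewrite (_ : c 0%N = a); [exact: rt_refl | apply: funext].
apply: rt_trans (IHk (ltnW kn)) _; pose j := Ordinal kn.
have -> : c k.+1 = dfwith (c k) j (b j).
  apply: funext => i; case: (eqVneq j i) => [<-|ji]; first by rewrite dfwithin /c ltnSn.
  by rewrite dfwithout // /c ltnS leq_eqVlt -[k]/(val j) val_eqE eq_sym (negPf ji).
have {1}-> : c k = dfwith (c k) j (a j).
  apply: funext => i; case: (eqVneq j i) => [<-|ji]; first by rewrite dfwithin /c ltnn.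
  by rewrite dfwithout.
exact: Rj.
Qed.

Lemma congruence_dfwith theta n (w : Omega n) (a : 'I_n -> A) j x y :
  congruence E theta -> theta (x, y) ->
  theta (E w (dfwith a j x), E w (dfwith a j y)).
Proof.
move=> thc xy; apply: (cong_compat thc) => i.
case: (eqVneq j i) => [<-|ji]; first by rewrite !dfwithin.
by rewrite !dfwithout //; exact: (cong_refl thc).
Qed.

Lemma congruence_join theta kappa : congruence E theta -> congruence E kappa ->
  congruence E (cong_join theta kappa).
Proof.
move=> thc kc; rewrite /cong_join; split=> /=.
- by move=> x; exact: rt_refl.
- move=> x0 y0; elim=> [x y xy|x|x y z _ yx _ zy].
  + by apply: rt_step; case: xy => [/(cong_sym thc)|/(cong_sym kc)] yx; [left|right].
  + exact: rt_refl.
  + exact: rt_trans zy yx.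
- by move=> x y z; exact: rt_trans.
- move=> n w a b; apply: clos_rt_compat => m w' c j x y.
  by case=> xy; [left|right]; apply: congruence_dfwith.
Qed.

Lemma sub_cong_joinl theta kappa : theta `<=` cong_join theta kappa.
Proof. by move=> [x y] xy; apply: rt_step; left. Qed.

Lemma sub_cong_joinr theta kappa : kappa `<=` cong_join theta kappa.
Proof. by move=> [x y] xy; apply: rt_step; right. Qed.

Lemma saturated_join theta kappa C : saturated theta C -> saturated kappa C ->
  saturated (cong_join theta kappa) C.
Proof.
move=> thC kC a b; rewrite /cong_join /=.
by elim=> [x y [/thC|/kC]|//|x y z _ xy _ yz /xy/yz].
Qed.

Lemma closed_open_classes sigma : congruence E sigma -> open_classes sigma ->
  closed sigma.
Proof.
move=> sc so; rewrite -openC openE => -[x y] /= nxy.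
exists ([set b | sigma (x, b)], [set b | sigma (y, b)]) => /=.
  by split; apply: open_nbhs_nbhs; split; (exact: so || exact: (cong_refl sc)).
move=> [x' y'] /= [xx' yy'] x'y'; apply: nxy.
exact: (cong_trans sc xx' (cong_trans sc x'y' (cong_sym sc yy'))).
Qed.

Section CompactResiduallyFinite.
Hypotheses (Acpt : compact [set: A]) (Ares : residually_finite E).

Lemma saturating_open_congruence C : clopen C ->
  exists kappa, [/\ congruence E kappa, open_classes kappa & saturated kappa C].
Proof.
case=> oC cC; have cCC : compact (C `*` ~` C).
  by apply: compact_setX; apply: (subclosed_compact _ Acpt) => //; exact: open_closedC.
pose D := [set k : set (A * A) | congruence E k /\ open_classes k].
have [] := @compact_cover_compact _ _ cCC _ D setC.
- by move=> k [kc ko]; exact: closed_openC (closed_open_classes kc ko).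
- move=> [x y] [/= Cx nCy].
  have /Ares[F [EF [[_ opnF _] [h [hc hh hxy]]]]] : x <> y.
    by move=> e; apply: nCy; rewrite -e.
  exists (kernel h) => //.
  by split; [exact: congruence_kernel hh | exact: open_classes_kernel].
move=> D' sD' cov; exists (\bigcap_(k in [set` D']) k); split.
- by apply: congruence_bigcap => k /sD'/set_mem[].
- by apply: open_classes_bigcap => k /sD'/set_mem[].
- move=> a b kab Ca; apply: contrapT => nCb.
  by have [k kD' /= []] := cov (a, b) (conj Ca nCb); exact: kab.
Qed.

Lemma open_congruence_above theta C : congruence E theta -> clopen C ->
  saturated theta C ->
  exists sigma, [/\ congruence E sigma, theta `<=` sigma, open_classes sigma
                  & saturated sigma C].
Proof.
move=> thc clC thC; have [kappa [kc ko kC]] := saturating_open_congruence clC.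
have joinc := congruence_join thc kc.
exists (cong_join theta kappa); split => //; first exact: sub_cong_joinl.
- exact: open_classes_sub kc joinc (@sub_cong_joinr _ _) ko.
- exact: saturated_join.
Qed.

End CompactResiduallyFinite.

End Congruences.

Local Open Scope quotient_scope.

Section Quotient.
Variables (Omega : nat -> topologicalType) (A : topologicalType) (E : ops Omega A).
Variables (theta : set (A * A)) (Hth : congruence E theta).

Local Notation Q := (quot_space Hth).
Local Notation pi := (\pi_Q : A -> Q).

Lemma quot_eqP a b : pi a = pi b <-> theta (a, b).
Proof. by split => [/eqmodP/asboolP // | ab]; apply/eqmodP/asboolP. Qed.

Lemma repr_quot a : theta (repr (pi a), a).
Proof. by apply/quot_eqP; rewrite reprK. Qed.

Lemma quot_ops_pi n (w : Omega n) (a : 'I_n -> A) :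
  quot_ops Hth n w (pi \o a) = pi (E w a).
Proof.
apply/quot_eqP; apply: (cong_compat Hth) => i; exact: repr_quot.
Qed.

Lemma saturated_quot_preimage (C : set Q) : saturated theta (pi @^-1` C).
Proof. by move=> a b /quot_eqP ab; rewrite /preimage /= ab. Qed.

Lemma clopen_quot_preimage (C : set Q) : clopen C -> clopen (pi @^-1` C).
Proof.
by case=> oC cC; split=> //; rewrite -openC preimage_setC; exact: (closed_openC cC).
Qed.

Lemma open_quot_class (sigma : set (A * A)) a : congruence E sigma ->
  theta `<=` sigma -> open_classes sigma -> open [set z : Q | sigma (a, repr z)].
Proof.
move=> sc ths so; change (open (pi @^-1` [set z : Q | sigma (a, repr z)])).
rewrite (_ : _ @^-1` _ = [set b | sigma (a, b)]) //; apply/seteqP; split=> b /= ab.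
- exact: (cong_trans sc ab (ths _ (repr_quot b))).
- exact: (cong_trans sc ab (ths _ (cong_sym Hth (repr_quot b)))).
Qed.

Lemma top_alg_quot : top_alg E ->
  (forall x (V : set Q), nbhs (pi x) V ->
     exists sigma, [/\ congruence E sigma, theta `<=` sigma, open_classes sigma
                     & forall y, sigma (x, y) -> V (pi y)]) ->
  top_alg (quot_ops Hth).
Proof.
move=> Ecnt base n [w q] V nV; pose a i := repr (q i).
have [sigma [sc ths so sV]] := base (E w a) V nV.
have [[W N] /= [nW nN] WNsub] :=
  Ecnt n (w, a) _ (open_nbhs_nbhs (conj (so (E w a)) (cong_refl sc _))).
exists (W, [set q' : {ptws 'I_n -> Q} | forall i, sigma (a i, repr (q' i))]).
  split=> //.
  suff Hi i : nbhs q (fun q' : {ptws 'I_n -> Q} => sigma (a i, repr (q' i))).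
    exact: filter_forall _ Hi.
  exact: (@proj_continuous _ (fun=> Q) i q _
    (open_nbhs_nbhs (conj (open_quot_class (a i) sc ths so) (cong_refl sc _)))).
move=> [w' q'] /= [Ww' aq']; apply: sV.
apply: (cong_trans sc (WNsub (w', a) (conj Ww' (nbhs_singleton nN)))).
exact: (cong_compat sc w' aq').
Qed.

Lemma compact_quot : compact [set: A] -> compact [set: Q].
Proof.
move=> Acpt; rewrite (_ : [set: Q] = pi @` [set: A]).
  by apply: continuous_compact => //; apply: continuous_subspaceT; exact: pi_continuous.
by apply/seteqP; split=> // q _; exists (repr q) => //; exact: reprK.
Qed.

Lemma closed_quot_set1 : closed theta -> forall q : Q, closed [set q].
Proof.
move=> thcl q; rewrite -openC; change (open (pi @^-1` ~` [set q])).
rewrite openE => a /= aq.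
have naq : ~ theta (a, repr q) by move/quot_eqP; rewrite reprK.
have [[X Y] /= [nX nY] XY] := open_nbhs_nbhs (conj (closed_openC thcl) naq).
apply: filterS nX => a' Xa' a'q; apply: (XY (a', repr q)).
  by split=> //; exact: nbhs_singleton.
by apply/quot_eqP; rewrite a'q reprK.
Qed.

Lemma quot_open_classes_discrete : open_classes theta -> forall U : set Q, open U.
Proof.
move=> tho U; change (open (pi @^-1` U)); rewrite openE => a Ua.
apply: filterS (open_nbhs_nbhs (conj (tho a) (cong_refl Hth a))) => b /quot_eqP ab.
by rewrite /preimage /= -ab.
Qed.

Lemma finite_quot : compact [set: A] -> open_classes theta -> finite_set [set: Q].
Proof.
move=> Acpt tho; have [|S _ Scov] := @compact_cover_compact _ _ Acpt _ setT
    (fun a => [set b | theta (a, b)]) (fun a _ => tho a).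
  by move=> b _; exists b => //; exact: (cong_refl Hth).
apply: (sub_finite_set _ (finite_image pi (finite_fset S))) => q _.
have [a aS ab] := Scov (repr q) I; exists a => //.
by rewrite -[RHS]reprK; exact/quot_eqP.
Qed.

Lemma finite_discrete_quot : top_alg E -> compact [set: A] -> open_classes theta ->
  finite_discrete_alg (quot_ops Hth).
Proof.
move=> Ecnt Acpt tho.
split; [exact: finite_quot | exact: quot_open_classes_discrete |].
apply: top_alg_quot => // x V nV; exists theta; split=> // y /quot_eqP <-.
exact: nbhs_singleton.
Qed.

End Quotient.

Section Coarsening.
Variables (Omega : nat -> topologicalType) (A : topologicalType) (E : ops Omega A).
Variables (theta sigma : set (A * A)).
Variables (Hth : congruence E theta) (Hs : congruence E sigma).
Hypothesis theta_sub_sigma : theta `<=` sigma.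

Definition quot_coarsen (q : quot_space Hth) : quot_space Hs :=
  \pi_(quot_space Hs) (repr q).

Lemma quot_coarsen_pi a : quot_coarsen (\pi_(quot_space Hth) a) = \pi a.
Proof. by apply/quot_eqP; apply: theta_sub_sigma; exact: repr_quot. Qed.

Lemma continuous_quot_coarsen : continuous quot_coarsen.
Proof.
apply/quotient_continuous; rewrite (_ : _ \o _ = \pi_(quot_space Hs)).
  exact: pi_continuous.
by apply: funext => a; exact: quot_coarsen_pi.
Qed.

Lemma is_hom_quot_coarsen : is_hom (quot_ops Hth) (quot_ops Hs) quot_coarsen.
Proof.
move=> n w q; pose a i := repr (q i).
have -> : q = \pi_(quot_space Hth) \o a by apply: funext => i; rewrite /= reprK.
rewrite quot_ops_pi quot_coarsen_pi -quot_ops_pi; congr (quot_ops Hs n w _).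
by apply: funext => i; rewrite /= quot_coarsen_pi.
Qed.

End Coarsening.

Lemma zero_dim_zero_dimensional (T : topologicalType) :
  zero_dim T -> (forall x : T, closed [set x]) -> zero_dimensional T.
Proof.
move=> zT T1 x y /eqP xy.
have [C [clC Cx CT]] := zT x _ (open_nbhs_nbhs (conj (closed_openC (T1 y)) xy)).
by exists C; split=> // Cy; exact: CT _ Cy erefl.
Qed.

Lemma zero_dimensional_hausdorff (T : topologicalType) :
  zero_dimensional T -> hausdorff_space T.
Proof.
rewrite open_hausdorff => zT x y /zT[C [[oC cC] Cx nCy]].
exists (C, ~` C); first by split; exact/mem_set.
by split=> //; [rewrite openC | rewrite setICr].
Qed.

Theorem theorem2p8 (Omega : nat -> topologicalType) (A : topologicalType)
  (E : ops Omega A) (HA : profinite E)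
  (theta : set (A * A)) (Hth : congruence E theta)
  (Hclosed : closed theta)
  (H0 : zero_dim (quot_space Hth)) :
  profinite (quot_ops Hth).
Proof.
case: HA => Ecnt Acpt _ Ares.
have zQ := zero_dim_zero_dimensional H0 (closed_quot_set1 Hclosed).
have above C : clopen C -> exists sigma,
    [/\ congruence E sigma, theta `<=` sigma, open_classes sigma
      & saturated sigma (\pi_(quot_space Hth) @^-1` C)].
  move=> clC; apply: (open_congruence_above Acpt Ares Hth).
    exact: clopen_quot_preimage.
  exact: saturated_quot_preimage.
split.
- apply: top_alg_quot => // x V /H0[C [clC Cx CV]].
  have [sigma [sc ths so sC]] := above C clC.
  by exists sigma; split=> // y /sC/(_ Cx)/CV.
- exact: compact_quot.
- exact: zero_dimensional_hausdorff.
- move=> x y /eqP/zQ[C [clC Cx nCy]].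
  have [sigma [sc ths so sC]] := above C clC.
  exists (quot_space sc), (quot_ops sc); split; first exact: finite_discrete_quot.
  exists (quot_coarsen (Hth := Hth) sc); split.
  + exact: continuous_quot_coarsen.
  + exact: is_hom_quot_coarsen.
  + by move=> /quot_eqP/sC; rewrite /preimage /= !reprK => /(_ Cx).
Qed.
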